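(* Let $F$ be a global function field with full constant field $\mathbb{F}_q$ and rational places $P_1,\dots,P_n$; fix $m\ge1$. Let $r\ge t\ge0$ and $j_1,\dots,j_m\ge0$ be integers. The set $\mathcal{U}(r,t;j_1,\dots,j_m)$ is nonempty if and only if (i) $mn-(j_1+2j_2+\cdots+mj_m)\le t\le(m+1)n-(2j_1+3j_2+\cdots+(m+1)j_m)$, and (ii) if $mn=t+j_1+2j_2+\cdots+mj_m$ and $r>t$, then there exists a positive divisor of degree $r-t$ whose support is disjoint from $\{P_1,\dots,P_n\}$.
   Context: For a positive divisor $D$: $\overline D=\sum_{i=1}^n\min(m+1,v_{P_i}(D))P_i$, $j_\ell(D)=|\{i:v_{P_i}(D)=m-\ell\}|$. $\mathcal{U}(r,t;j_1,\dots,j_m)$ is the set of positive divisors $D$ of $F$ with $\deg D=r$, $\deg\overline D=t$ and $j_\ell(D)=j_\ell$ for $1\le\ell\le m$. *)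

From HB Require Import structures.
From mathcomp Require Import all_boot all_order all_algebra.
From mathcomp Require Import finmap.
Set Implicit Arguments.
Unset Strict Implicit.
Unset Printing Implicit Defensive.
Import Order.TTheory GRing.Theory Num.Theory.
Local Open Scope ring_scope.

(* Abstract model of the divisor group of a function field F:
   [place] is the set of places of F, [pdeg : place -> nat] their degrees. *)
Definition divisor (place : choiceType) := {fsfun place -> int with 0}.

Section Divisors.
Variables (place : choiceType) (pdeg : place -> nat).

Definition vP (D : divisor place) (p : place) : int := D p.

Definition ddeg (D : divisor place) : int :=
  \sum_(p <- finsupp D) (pdeg p)%:Z * vP D p.

Definition positive_div (D : divisor place) : Prop := forall p, 0 <= vP D p.

Variables (n : nat) (P : 'I_n -> place) (m : nat).

Definition Dbar (D : divisor place) : divisor place :=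
  [fsfun p in [fset P i | i : 'I_n]%fset => Num.min (m.+1)%:Z (vP D p) | 0].

Definition jl (D : divisor place) (l : nat) : nat :=
  #|[set i : 'I_n | vP D (P i) == m%:Z - l%:Z]|.

(* U(r,t; j_1,...,j_m) (only j 1, ..., j m are used) *)
Definition Uset (r t : int) (j : nat -> nat) (D : divisor place) : Prop :=
  [/\ positive_div D, ddeg D = r, ddeg (Dbar D) = t &
      forall l : nat, (1 <= l <= m)%N -> jl D l = j l].

End Divisors.

From HB Require Import structures.
From mathcomp Require Import all_boot all_order all_algebra.
From mathcomp Require Import finmap.
From mathcomp Require Import zify.
Import Order.TTheory GRing.Theory Num.Theory.
Set Implicit Arguments.
Unset Strict Implicit.
Unset Printing Implicit Defensive.

(* A positive divisor D is determined by its values w_i = v_{P_i}(D) and by its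
   part E away from the P_i: deg D = deg E + sum_i w_i, deg Dbar =
   sum_i min(m+1, w_i), and j_l counts the i with w_i = m - l.  Pointwise
   min(m+1, w) + (m - w)_+ = m + [w > m], so summing over i gives
   t + sum_l l j_l = mn + #{i | w_i > m}, and likewise
   t + sum_l (l+1) j_l = mn + #{i | w_i > m} + #{i | w_i < m} <= (m+1)n: this
   is (i).  Conversely, under (i) one takes b = t + sum_l l j_l - mn values
   m+1 and n - sum_l j_l - b values m besides the prescribed ones.  If b > 0
   the excess r - t can be put on a place of value m+1 without changing Dbar
   or the j_l; if b = 0 all w_i <= m, so deg D = t + deg E and the excess
   must be carried by E, which is (ii). *)

Lemma card_set_sum (I : finType) (p : pred I) : #|[set i | p i]| = \sum_i p i.
Proof.
by rewrite -sum1_card big_mkcond /=; apply: eq_bigr => i _; rewrite inE; case: (p i).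
Qed.

Lemma sum_nth_ord (T : Type) (x0 : T) (s : seq T) (n : nat) (F : T -> nat) :
  size s = n -> \sum_(i < n) F (nth x0 s i) = \sum_(x <- s) F x.
Proof. by move=> <-; rewrite (big_nth x0) big_mkord. Qed.

Section Levels.
Variable m : nat.

Lemma sum_level_indicator (g : nat -> nat) (v : nat) :
  \sum_(1 <= l < m.+1) g l * (m - l == v) = if v < m then g (m - v) else 0.
Proof.
have off_term l : l \in index_iota 1 m.+1 -> l != m - v -> g l * (m - l == v) = 0.
  rewrite mem_index_iota => hl; case: (m - l =P v) => [<- /eqP|_ _]; [lia | exact: muln0].
case: ltnP => hv; last first.
  rewrite big1_seq // => l /andP [_ hl]; rewrite off_term //.
  by move: hl; rewrite mem_index_iota; lia.
have mem_mv : m - v \in index_iota 1 m.+1 by rewrite mem_index_iota; lia.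
rewrite (bigD1_seq _ mem_mv (iota_uniq _ _)) /= subKn ?(ltnW hv) // eqxx muln1.
by rewrite big1_seq ?addn0 // => l /andP [hl ?]; apply: off_term.
Qed.

Lemma sum_level_counts (I : finType) (w : I -> nat) (g : nat -> nat) :
  \sum_(1 <= l < m.+1) g l * #|[set i | w i == m - l]|
  = \sum_i (if w i < m then g (m - w i) else 0).
Proof.
under eq_bigr => l _ do rewrite card_set_sum big_distrr /=.
rewrite exchange_big; apply: eq_bigr => i _; rewrite -sum_level_indicator.
by apply: eq_bigr => l _; rewrite eq_sym.
Qed.

Section Profile.
Variables (I : finType) (w : I -> nat).

Lemma deficit_identity :
  \sum_i minn m.+1 (w i) + \sum_(1 <= l < m.+1) l * #|[set i | w i == m - l]|
  = m * #|I| + \sum_i (m < w i).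
Proof.
rewrite sum_level_counts -big_split mulnC -sum_nat_const -big_split /=.
by apply: eq_bigr => i _; case: ltnP => /=; lia.
Qed.

Lemma succ_deficit_identity :
  \sum_(1 <= l < m.+1) l.+1 * #|[set i | w i == m - l]|
  = \sum_(1 <= l < m.+1) l * #|[set i | w i == m - l]| + \sum_i (w i < m).
Proof.
rewrite !sum_level_counts -big_split /=.
by apply: eq_bigr => i _; case: ltnP => _; rewrite ?addn1.
Qed.

Lemma deficit_lower_bound :
  m * #|I| <= \sum_i minn m.+1 (w i) + \sum_(1 <= l < m.+1) l * #|[set i | w i == m - l]|.
Proof. by rewrite deficit_identity leq_addr. Qed.

Lemma deficit_upper_bound :
  \sum_i minn m.+1 (w i) + \sum_(1 <= l < m.+1) l.+1 * #|[set i | w i == m - l]|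
  <= m.+1 * #|I|.
Proof.
rewrite succ_deficit_identity addnA deficit_identity -addnA mulSn addnC leq_add2r.
rewrite -big_split -sum1_card /=; apply: leq_sum => i _; by case: ltngtP.
Qed.

Lemma deficit_tight_le :
  m * #|I| = \sum_i minn m.+1 (w i) + \sum_(1 <= l < m.+1) l * #|[set i | w i == m - l]| ->
  forall i, w i <= m.
Proof.
rewrite deficit_identity => /eqP; rewrite -{1}[m * _]addn0 eqn_add2l eq_sym.
by rewrite sum_nat_eq0 => /forallP hw i; move: (hw i); rewrite eqb0 -leqNgt.
Qed.

End Profile.

Definition level_seq (j : nat -> nat) (a b : nat) : seq nat :=
  flatten [seq nseq (j l) (m - l) | l <- index_iota 1 m.+1] ++ nseq a m ++ nseq b m.+1.

Lemma sum_level_seq (j : nat -> nat) (a b : nat) (F : nat -> nat) :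
  \sum_(x <- level_seq j a b) F x
  = \sum_(1 <= l < m.+1) j l * F (m - l) + a * F m + b * F m.+1.
Proof.
have flat : \sum_(x <- flatten [seq nseq (j l) (m - l) | l <- index_iota 1 m.+1]) F x
    = \sum_(1 <= l < m.+1) j l * F (m - l).
  rewrite big_flatten big_map; apply: eq_bigr => l _.
  by rewrite big_nseq iter_addn_0 mulnC.
by rewrite !big_cat /= flat !big_nseq !iter_addn_0 addnA [a * _]mulnC [b * _]mulnC.
Qed.

Lemma raise_level_above (I : finType) (w : I -> nat) (i0 : I) (e : nat) : m < w i0 ->
  exists w' : I -> nat,
    [/\ forall v, v <= m -> #|[set i | w' i == v]| = #|[set i | w i == v]|,
        \sum_i minn m.+1 (w' i) = \sum_i minn m.+1 (w i) &
        \sum_i w' i = \sum_i w i + e].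
Proof.
move=> hi0; exists (fun i => w i + (i == i0) * e); split.
- move=> v hv; apply: eq_card => i; rewrite !inE.
  case: (i =P i0) => [-> | _]; last by rewrite mul0n addn0.
  by rewrite mul1n !gtn_eqF //; lia.
- apply: eq_bigr => i _; case: (i =P i0) => [-> | _]; last by rewrite mul0n addn0.
  by rewrite mul1n !(minn_idPl _) //; lia.
- rewrite big_split /=; congr (_ + _).
  by rewrite (bigD1 i0) //= eqxx mul1n big1 ?addn0 // => i /negPf ->.
Qed.

Lemma exists_levels (n : nat) (j : nat -> nat) (t : nat) :
  m * n <= t + \sum_(1 <= l < m.+1) l * j l ->
  t + \sum_(1 <= l < m.+1) l.+1 * j l <= m.+1 * n ->
  exists w : 'I_n -> nat,
    [/\ forall l, 1 <= l <= m -> #|[set i | w i == m - l]| = j l,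
        \sum_i minn m.+1 (w i) = t, \sum_i w i = t &
        m * n < t + \sum_(1 <= l < m.+1) l * j l -> exists i, m < w i].
Proof.
set S1 := \sum_(1 <= l < m.+1) l * j l; set J := \sum_(1 <= l < m.+1) j l.
have -> : \sum_(1 <= l < m.+1) l.+1 * j l = S1 + J.
  by rewrite -big_split; apply: eq_bigr => l _; rewrite mulSn addnC.
rewrite mulSn => lower upper.
have deficitJ : \sum_(1 <= l < m.+1) j l * (m - l) + S1 = m * J.
  rewrite -big_split big_distrr; apply: eq_big_nat => l /andP [_ hl].
  by rewrite /= [j l * _]mulnC -mulnDl subnK.
set b := t + S1 - m * n; set a := n - J - b.
have sizes : m * J + m * a + m * b = m * n.
  by rewrite -!mulnDr; congr (m * _); lia.
have size_s : size (level_seq j a b) = n.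
  rewrite -sum1_size sum_level_seq (eq_bigr (fun l => j l)) => [|l _]; last exact: muln1.
  lia.
pose w i := nth 0 (level_seq j a b) (i : 'I_n).
have sum_w F : \sum_i F (w i) = \sum_(1 <= l < m.+1) j l * F (m - l) + a * F m + b * F m.+1.
  by rewrite sum_nth_ord // sum_level_seq.
have card_w v : #|[set i | w i == v]|
    = \sum_(1 <= l < m.+1) j l * (m - l == v) + a * (m == v) + b * (m.+1 == v).
  by rewrite card_set_sum (sum_w (fun x => nat_of_bool (x == v))).
have sum_min : \sum_i minn m.+1 (w i) = \sum_i w i.
  rewrite (sum_w (minn m.+1)) (sum_w id) minnn (minn_idPr (leqnSn m)).
  congr (_ + _ + _); apply: eq_big_nat => l _; congr (_ * _).
  by apply/minn_idPr; lia.
have sum_val : \sum_i w i = t.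
  rewrite (sum_w id) [a * _]mulnC [b * _]mulnC mulSn; lia.
exists w; rewrite sum_min; split => //.
- move=> l /andP [l_gt0 l_le_m]; have lt_m : m - l < m by lia.
  rewrite card_w sum_level_indicator lt_m subKn // gtn_eqF // gtn_eqF; last by lia.
  by rewrite !muln0 !addn0.
- move=> slack; have /card_gt0P [i] : 0 < #|[set i | w i == m.+1]|.
    rewrite card_w sum_level_indicator ifF; last by apply/negbTE; rewrite -leqNgt.
    by rewrite (ltn_eqF (ltnSn m)) eqxx muln0 muln1 /b; lia.
  by rewrite inE => /eqP w_i; exists i; rewrite w_i.
Qed.

Lemma levels_spec (n : nat) (j : nat -> nat) (t r : nat) (off : nat -> Prop) :
  off 0 -> t <= r ->
  (exists w : 'I_n -> nat, exists2 d, off d &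
     [/\ forall l, 1 <= l <= m -> #|[set i | w i == m - l]| = j l,
         \sum_i minn m.+1 (w i) = t & d + \sum_i w i = r])
  <-> [/\ m * n <= t + \sum_(1 <= l < m.+1) l * j l,
          t + \sum_(1 <= l < m.+1) l.+1 * j l <= m.+1 * n &
          (m * n = t + \sum_(1 <= l < m.+1) l * j l -> t < r -> off (r - t))].
Proof.
move=> off0 t_le_r; split.
  move=> [w [d off_d [counts sum_min sum_w]]].
  have levelsE g : \sum_(1 <= l < m.+1) g l * j l
                   = \sum_(1 <= l < m.+1) g l * #|[set i | w i == m - l]|.
    by apply: eq_big_nat => l hl; rewrite counts.
  rewrite !levelsE -sum_min; split.
  - by have := deficit_lower_bound w; rewrite card_ord.
  - by have := deficit_upper_bound w; rewrite card_ord.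
  - move=> tight _.
    have le_m : forall i, w i <= m by apply: deficit_tight_le; rewrite card_ord.
    suff -> : \sum_i minn m.+1 (w i) = \sum_i w i by rewrite -sum_w addnK.
    by apply: eq_bigr => i _; apply/minn_idPr/leqW/le_m.
move=> [lower upper tight_off].
have [w [counts sum_min sum_w raise]] := exists_levels lower upper.
have [slack | no_slack] := ltnP (m * n) (t + \sum_(1 <= l < m.+1) l * j l).
  have [i0 /(raise_level_above (r - t)) [w' [counts' sum_min' sum_w']]] := raise slack.
  exists w', 0 => //; split.
  - by move=> l hl; rewrite counts' ?leq_subr ?counts.
  - by rewrite sum_min'.
  - by rewrite sum_w' sum_w add0n subnKC.
have tight : m * n = t + \sum_(1 <= l < m.+1) l * j l by apply/eqP; rewrite eqn_leq lower.
have [t_lt_r | r_le_t] := ltnP t r.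
  by exists w, (r - t); [exact: tight_off | split => //; rewrite sum_w subnK].
by exists w, 0 => //; split => //; rewrite sum_w; lia.
Qed.

End Levels.

Local Open Scope ring_scope.

Lemma Posz_sum (I : finType) (F : I -> nat) : (\sum_i F i)%N%:Z = \sum_i (F i)%:Z.
Proof. exact: (big_morph Posz PoszD). Qed.

Lemma min_Posz (a b : nat) : Num.min a%:Z b%:Z = (minn a b)%:Z.
Proof. by rewrite /Order.min ltz_nat /minn; case: ifP. Qed.

Section DivisorDegree.
Variables (place : choiceType) (pdeg : place -> nat).

Lemma ddeg_seq (D : divisor place) (s : seq place) :
  uniq s -> {subset finsupp D <= s} -> ddeg pdeg D = \sum_(p <- s) (pdeg p)%:Z * D p.
Proof.
move=> s_uniq supp_s; rewrite /ddeg /vP [RHS](bigID (mem (finsupp D))) /=.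
rewrite [X in _ = _ + X]big1 ?addr0 => [|p /fsfun_dflt ->]; last exact: mulr0.
rewrite -[RHS]big_filter; apply: perm_big; apply: uniq_perm.
- exact: fset_uniq.
- by rewrite filter_uniq.
- move=> p; rewrite mem_filter.
  by case p_supp: (p \in finsupp D); rewrite /= ?(supp_s _ p_supp).
Qed.

Lemma ddeg0 : ddeg pdeg [fsfun] = 0.
Proof. by rewrite /ddeg finsupp0 big_nil. Qed.

Lemma ddeg_ge0 (D : divisor place) : positive_div D -> 0 <= ddeg pdeg D.
Proof. by move=> D_pos; apply: sumr_ge0 => p _; rewrite mulr_ge0. Qed.

Variables (n : nat) (P : 'I_n -> place).
Hypotheses (P_inj : injective P) (P_rat : forall i, pdeg (P i) = 1%N).

Definition off_places (D : divisor place) : divisor place :=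
  [fsfun p in finsupp D => if p \in codom P then 0 else D p | 0].

Lemma off_placesE (D : divisor place) (p : place) :
  off_places D p = if p \in codom P then 0 else D p.
Proof.
rewrite /off_places fsfun_fun; case: ifP => // p_supp.
by rewrite fsfun_dflt ?p_supp //; case: ifP.
Qed.

Lemma off_places_pos (D : divisor place) : positive_div D -> positive_div (off_places D).
Proof. by move=> D_pos p; rewrite /vP off_placesE; case: ifP => // _; apply: D_pos. Qed.

Lemma off_places_notin (D : divisor place) (i : 'I_n) : P i \notin finsupp (off_places D).
Proof. by rewrite mem_finsupp off_placesE codom_f eqxx. Qed.

Lemma ddeg_off_places (D : divisor place) :
  ddeg pdeg D = ddeg pdeg (off_places D) + \sum_i D (P i).
Proof.
set s := [seq p <- finsupp D | p \notin codom P].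
have s_uniq : uniq s by rewrite filter_uniq // fset_uniq.
rewrite (@ddeg_seq D (s ++ map P (index_enum 'I_n))); last 2 first.
- rewrite cat_uniq s_uniq (map_inj_uniq P_inj) index_enum_uniq andbT /=.
  by apply/hasPn => p /mapP [i _ ->]; rewrite mem_filter codom_f.
- move=> p p_supp; rewrite mem_cat mem_filter p_supp andbT.
  by case: (boolP (p \in codom P)) => //= /codomP [i ->]; rewrite map_f ?mem_index_enum.
rewrite (@ddeg_seq (off_places D) s) // => [|p]; last first.
  by rewrite mem_finsupp off_placesE mem_filter mem_finsupp; case: (p \in codom P).
rewrite big_cat big_map /=; congr (_ + _).
- by apply: eq_big_seq => p; rewrite mem_filter off_placesE => /andP [/negPf ->].
- by apply: eq_bigr => i _; rewrite P_rat mul1r.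
Qed.

Lemma ddeg_Dbar (m : nat) (D : divisor place) :
  ddeg pdeg (Dbar P m D) = \sum_i Num.min m.+1%:Z (D (P i)).
Proof.
have P_fset i : P i \in [fset P i | i : 'I_n]%fset by apply/imfsetP; exists i.
rewrite (@ddeg_seq _ (map P (index_enum 'I_n))); last 2 first.
- by rewrite (map_inj_uniq P_inj) index_enum_uniq.
- move=> p; rewrite mem_finsupp /Dbar fsfun_fun; case: ifP => [|_]; last by rewrite eqxx.
  by move=> /imfsetP [i _ ->] _; rewrite map_f ?mem_index_enum.
by rewrite big_map; apply: eq_bigr => i _; rewrite P_rat mul1r /Dbar fsfun_fun P_fset.
Qed.

Lemma jl_values (m : nat) (D : divisor place) (w : 'I_n -> nat) :
  (forall i, D (P i) = (w i)%:Z) ->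
  forall l, (l <= m)%N -> jl P m D l = #|[set i | w i == (m - l)%N]|.
Proof.
by move=> Dw l l_le_m; apply: eq_card => i; rewrite !inE /vP Dw subzn.
Qed.

Lemma divisor_with_values (w : 'I_n -> nat) (E : divisor place) :
  positive_div E -> (forall i, P i \notin finsupp E) ->
  exists D : divisor place,
    [/\ positive_div D, forall i, D (P i) = (w i)%:Z & off_places D = E].
Proof.
move=> E_pos E_off.
pose F p := if [pick i | P i == p] is Some i then (w i)%:Z else E p.
exists [fsfun p in ([fset P i | i : 'I_n] `|` finsupp E)%fset => F p | 0]; split.
- move=> p; rewrite /vP fsfun_fun; case: ifP => // _; rewrite /F.
  by case: pickP => [i _ //|_]; exact: E_pos.
- move=> i; rewrite fsfun_fun in_fsetU (_ : P i \in _) /=; last by apply/imfsetP; exists i.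
  by rewrite /F; case: pickP => [k /eqP /P_inj -> //|/(_ i)]; rewrite eqxx.
- apply/fsfunP => p; rewrite off_placesE.
  case: (boolP (p \in codom P)) => [/codomP [i ->]|p_off]; first exact/esym/fsfun_dflt.
  rewrite fsfun_fun /F; case: ifP => [_|].
  + by case: pickP => [k /eqP k_p|//]; rewrite -k_p codom_f in p_off.
  + by rewrite in_fsetU => /norP [_ p_supp]; rewrite fsfun_dflt.
Qed.

Definition off_degree (d : nat) : Prop :=
  exists E : divisor place,
    [/\ positive_div E, ddeg pdeg E = d%:Z & forall i, P i \notin finsupp E].

Lemma off_degree0 : off_degree 0.
Proof.
exists [fsfun]; split; first by move=> p; rewrite /vP fsfunE.
- exact: ddeg0.
- by move=> i; rewrite finsupp0.
Qed.

Lemma Uset_values (m : nat) (r t : nat) (j : nat -> nat) :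
  (exists D, Uset pdeg P m r%:Z t%:Z j D) <->
  exists w : 'I_n -> nat, exists2 d, off_degree d &
    [/\ forall l, (1 <= l <= m)%N -> #|[set i | w i == (m - l)%N]| = j l,
        (\sum_i minn m.+1 (w i))%N = t & (d + \sum_i w i)%N = r].
Proof.
split.
  move=> [D [D_pos D_deg Dbar_deg D_jl]].
  pose w i := `|D (P i)|%N.
  have Dw i : D (P i) = (w i)%:Z by rewrite /w gez0_abs //; exact: D_pos.
  have off_pos := off_places_pos D_pos.
  exists w, `|ddeg pdeg (off_places D)|%N.
    exists (off_places D); rewrite gez0_abs ?ddeg_ge0 //.
    by split=> // i; apply: off_places_notin.
  split.
  - by move=> l /andP [l_gt0 l_le_m]; rewrite -(jl_values Dw) ?D_jl ?l_gt0.
  - apply/eqP; rewrite -eqz_nat -Dbar_deg ddeg_Dbar Posz_sum; apply/eqP.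
    by apply: eq_bigr => i _; rewrite Dw min_Posz.
  - apply/eqP; rewrite -eqz_nat PoszD gez0_abs ?ddeg_ge0 //.
    rewrite -D_deg [ddeg _ D]ddeg_off_places Posz_sum; apply/eqP; congr (_ + _).
    by apply: eq_bigr => i _; rewrite Dw.
move=> [w [d [E [E_pos E_deg E_off]] [counts sum_min sum_w]]].
have [D [D_pos Dw D_off]] := divisor_with_values w E_pos E_off.
exists D; split => //.
- rewrite ddeg_off_places D_off E_deg -sum_w PoszD Posz_sum.
  by congr (_ + _); apply: eq_bigr => i _; rewrite Dw.
- rewrite ddeg_Dbar -sum_min Posz_sum.
  by apply: eq_bigr => i _; rewrite Dw min_Posz.
- by move=> l /andP [l_gt0 l_le_m]; rewrite (jl_values Dw) // counts ?l_gt0.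
Qed.

End DivisorDegree.

Theorem lemma3p3 (place : choiceType) (pdeg : place -> nat)
  (pdeg_pos : forall p, (0 < pdeg p)%N)
  (n : nat) (P : 'I_n -> place) (P_inj : injective P)
  (P_rat : forall i, pdeg (P i) = 1%N)
  (m : nat) (m_ge1 : (1 <= m)%N)
  (r t : int) (j : nat -> nat) (t_ge0 : 0 <= t) (t_le_r : t <= r) :
  (exists D : divisor place, Uset pdeg P m r t j D) <->
  ((m * n)%:Z - (\sum_(1 <= l < m.+1) l * j l)%N%:Z <= t
     <= (m.+1 * n)%:Z - (\sum_(1 <= l < m.+1) l.+1 * j l)%N%:Z
   /\ ((m * n)%:Z = t + (\sum_(1 <= l < m.+1) l * j l)%N%:Z -> t < r ->
       exists E : divisor place,
         [/\ positive_div E, ddeg pdeg E = r - t &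
             forall i : 'I_n, P i \notin finsupp E])).
Proof.
case: t => [t|//] in t_ge0 t_le_r *; case: r => [r|//] in t_le_r *.
rewrite lez_nat in t_le_r.
rewrite (Uset_values P_inj P_rat).
rewrite (@levels_spec m n j t r _ (off_degree0 pdeg P) t_le_r).
split=> [[lower upper tight] | [/andP [lower upper] tight]].
  split=> [|tight_Z t_lt_r]; first by apply/andP; split; lia.
  by rewrite subzn //; apply: tight; lia.
split=> [||tight_N t_lt_r]; try lia.
by rewrite /off_degree -subzn //; apply: tight; lia.
Qed.
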